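(* Let $n,m\ge 2$ and $K$ be positive integers, $T=mn$, and consider the one-way fixed effects panel regression model \[ \mathbf{y}=\mathbf{X}\boldsymbol{\beta}+\mathbf{Z}\boldsymbol{\gamma}+\mathbf{u}, \] where $\mathbf{y}\in\mathbb{R}^T$ is the response vector, $\mathbf{X}$ is a known non-stochastic real $(T\times K)$ matrix, $\boldsymbol{\beta}\in\mathbb{R}^K$ and $\boldsymbol{\gamma}\in\mathbb{R}^n$ are unknown parameters, $\mathbf{Z}=\mathbf{I}_n\otimes\mathbf{e}_m$ with $\mathbf{e}_m$ the $(m\times1)$ vector of ones, $E(\mathbf{u})=\mathbf{0}$ and $E(\mathbf{u}\mathbf{u}')=\mathbf{I}_n\otimes\boldsymbol{\Sigma}$ with $\boldsymbol{\Sigma}$ a known symmetric positive definite $(m\times m)$ matrix. Define \[ \mathbf{Q}=\mathbf{Z}\big(\mathbf{Z}'(\mathbf{I}_n\otimes\boldsymbol{\Sigma}^{-1})\mathbf{Z}\big)^{-1}\mathbf{Z}'(\mathbf{I}_n\otimes\boldsymbol{\Sigma}^{-1}),\qquad \mathbf{P}=(\mathbf{I}_n\otimes\boldsymbol{\Sigma}^{-1})(\mathbf{I}_T-\mathbf{Q}), \] $\mathbf{M}_m=\mathbf{I}_m-\mathbf{e}_m\mathbf{e}_m'/m$, $\mathbf{M}=\mathbf{I}_n\otimes\mathbf{M}_m$, and let $(\mathbf{I}_n\otimes\mathbf{M}_m\boldsymbol{\Sigma}\mathbf{M}_m)^{+}$ denote the Moore–Penrose inverse of $\mathbf{I}_n\otimes\mathbf{M}_m\boldsymbol{\Sigma}\mathbf{M}_m$.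 Set $\mathbf{C}_+=\mathbf{X}'\mathbf{M}(\mathbf{I}_n\otimes\mathbf{M}_m\boldsymbol{\Sigma}\mathbf{M}_m)^{+}\mathbf{M}\mathbf{X}$, and assume that $\mathbf{X}'\mathbf{P}\mathbf{X}$ and $\mathbf{C}_+$ are nonsingular. Define \[ \hat{\boldsymbol{\beta}}_{GLS}=(\mathbf{X}'\mathbf{P}\mathbf{X})^{-1}\mathbf{X}'\mathbf{P}\mathbf{y},\qquad \hat{\boldsymbol{\beta}}_{MLS}=\mathbf{C}_+^{-1}\mathbf{X}'\mathbf{M}(\mathbf{I}_n\otimes\mathbf{M}_m\boldsymbol{\Sigma}\mathbf{M}_m)^{+}\mathbf{y}. \] Then $\hat{\boldsymbol{\beta}}_{MLS}=\hat{\boldsymbol{\beta}}_{GLS}$ (for every realization $\mathbf{y}\in\mathbb{R}^T$).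
   Context: $\otimes$ denotes the Kronecker product; $\mathbf{I}_k$ the $k\times k$ identity matrix. The Moore–Penrose inverse $\mathbf{B}^+$ of a matrix $\mathbf{B}$ is the unique matrix satisfying $\mathbf{B}\mathbf{B}^+\mathbf{B}=\mathbf{B}$, $\mathbf{B}^+\mathbf{B}\mathbf{B}^+=\mathbf{B}^+$, and $\mathbf{B}\mathbf{B}^+$, $\mathbf{B}^+\mathbf{B}$ symmetric. $\hat{\boldsymbol{\beta}}_{GLS}$ is the generalized least squares estimator of $\boldsymbol{\beta}$ in the fixed effects model, and $\hat{\boldsymbol{\beta}}_{MLS}$ is the Moore–Penrose inverse least squares estimator of $\boldsymbol{\beta}$ in the within-transformed model $\mathbf{M}\mathbf{y}=\mathbf{M}\mathbf{X}\boldsymbol{\beta}+\mathbf{M}\mathbf{u}$, whose error has singular dispersion $\mathbf{I}_n\otimes\mathbf{M}_m\boldsymbol{\Sigma}\mathbf{M}_m$. *)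

From mathcomp Require Import all_boot all_order all_algebra.
From mathcomp Require Export mxtens.
Set Implicit Arguments. Unset Strict Implicit. Unset Printing Implicit Defensive.
Import Order.TTheory GRing.Theory Num.Theory.
Local Open Scope ring_scope.

Definition is_MP_inverse (R : realFieldType) (p q : nat)
  (B : 'M[R]_(p, q)) (Bp : 'M[R]_(q, p)) : Prop :=
  [/\ B *m Bp *m B = B, Bp *m B *m Bp = Bp,
      (B *m Bp)^T = B *m Bp & (Bp *m B)^T = Bp *m B].

Definition sym_pos_def (R : realFieldType) (k : nat) (S : 'M[R]_k) : Prop :=
  S^T = S /\ forall x : 'cV[R]_k, x != 0 -> 0 < (x^T *m S *m x) ord0 ord0.

Definition ones (R : realFieldType) (k : nat) : 'cV[R]_k := const_mx 1.

Definition centering (R : realFieldType) (k : nat) : 'M[R]_k :=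
  1%:M - (k%:R)^-1 *: (ones R k *m (ones R k)^T).

From mathcomp Require Import all_boot all_order all_algebra.
From mathcomp Require Import mxtens.
Set Implicit Arguments. Unset Strict Implicit. Unset Printing Implicit Defensive.
Import Order.TTheory GRing.Theory Num.Theory.
Local Open Scope ring_scope.

(* With e the vector of ones, P = I_n ⊗ A where A = Σ⁻¹ - Σ⁻¹e(e'Σ⁻¹e)⁻¹e'Σ⁻¹.
   Since A e = 0, A M_m = M_m A = A, and A Σ M_m = M_m; hence both products of A
   with M_m Σ M_m equal the symmetric idempotent M_m, i.e. A is the
   Moore–Penrose inverse of M_m Σ M_m.  Kronecker products preserve the Penrose
   conditions and the Moore–Penrose inverse is unique, so
   (I_n ⊗ M_m Σ M_m)⁺ = P; as M P = P M = P, C_+ = X'PX and the two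
   estimators coincide. *)

Lemma MP_inverse_unique (R : realFieldType) (p q : nat)
    (B : 'M[R]_(p, q)) (G1 G2 : 'M[R]_(q, p)) :
  is_MP_inverse B G1 -> is_MP_inverse B G2 -> G1 = G2.
Proof.
move=> [BG1B G1BG1 symBG1 symG1B] [BG2B G2BG2 symBG2 symG2B].
have BT_BG2 : B^T *m (B *m G2)^T = B^T by rewrite -trmx_mul BG2B.
have G1B_BT : (G1 *m B)^T *m B^T = B^T by rewrite -trmx_mul mulmxA BG1B.
have -> : G1 = G1 *m B *m G2.
  rewrite -{1}G1BG1 -mulmxA -symBG1 trmx_mul -BT_BG2 symBG2.
  by rewrite (mulmxA G1^T) -trmx_mul symBG1 !mulmxA G1BG1.
rewrite -{2}G2BG2 -symG2B trmx_mul -G1B_BT symG1B.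
by rewrite -(mulmxA _ B^T) -trmx_mul symG2B -!mulmxA (mulmxA G2) G2BG2.
Qed.

Lemma tens1mx1 (R : comPzRingType) (a b : nat) :
  (1%:M : 'M[R]_a) *t (1%:M : 'M[R]_b) = 1%:M.
Proof.
apply/matrixP=> i j.
case: (mxtens_indexP i)=> i0 i1; case: (mxtens_indexP j)=> j0 j1.
rewrite tensmxE !mxE (inj_eq (can_inj (@mxtens_indexK a b))) xpair_eqE.
by case: (i0 == j0); case: (i1 == j1); rewrite ?mulr1 ?mulr0 ?mul0r.
Qed.

Lemma tensmxBr (R : comPzRingType) (a b p q : nat)
    (A : 'M[R]_(a, b)) (B C : 'M[R]_(p, q)) :
  A *t (B - C) = A *t B - A *t C.
Proof. by apply/matrixP=> i j; rewrite !mxE mulrBr. Qed.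

Lemma invmx_tens (R : comUnitRingType) (a b : nat) (A : 'M[R]_a) (B : 'M[R]_b) :
  A \in unitmx -> B \in unitmx -> invmx (A *t B) = invmx A *t invmx B.
Proof.
move=> A_unit B_unit.
have AB_inv : (A *t B) *m (invmx A *t invmx B) = 1%:M.
  by rewrite tensmx_mul !mulmxV // tens1mx1.
have [AB_unit _] := mulmx1_unit AB_inv.
by rewrite -[RHS](mulKmx AB_unit) AB_inv mulmx1.
Qed.

Lemma is_MP_inverse1 (R : realFieldType) (k : nat) :
  is_MP_inverse (1%:M : 'M[R]_k) 1%:M.
Proof. by split; rewrite ?mulmx1 ?trmx1. Qed.

Lemma is_MP_inverse_tens (R : realFieldType) (p q r s : nat)
    (A : 'M[R]_(p, q)) (Ap : 'M[R]_(q, p)) (B : 'M[R]_(r, s)) (Bp : 'M[R]_(s, r)) :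
  is_MP_inverse A Ap -> is_MP_inverse B Bp -> is_MP_inverse (A *t B) (Ap *t Bp).
Proof.
move=> [AAA ApApAp symAAp symApA] [BBB BpBpBp symBBp symBpB].
by split; rewrite !tensmx_mul ?AAA ?BBB ?ApApAp ?BpBpBp // trmx_tens
  ?symAAp ?symBBp ?symApA ?symBpB.
Qed.

Lemma sym_pos_def_unit (R : realFieldType) (k : nat) (S : 'M[R]_k) :
  sym_pos_def S -> S \in unitmx.
Proof.
move=> [_ posS]; rewrite unitmxE unitfE; apply/negP => /det0P [v v_neq0 vS0].
have /posS : v^T != 0 by rewrite trmx_eq0.
by rewrite trmxK vS0 mul0mx mxE ltxx.
Qed.

Section Centering.
Variables (R : realFieldType) (m : nat).
Hypothesis m_gt0 : (0 < m)%N.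

Local Notation e := (ones R m).
Local Notation Mm := (centering R m).

Lemma ones_neq0 : e != 0.
Proof.
apply/negP => /eqP/matrixP/(_ (Ordinal m_gt0) ord0).
by rewrite !mxE => /eqP; rewrite oner_eq0.
Qed.

Lemma tr_ones_mul_ones : e^T *m e = (m%:R : R)%:M.
Proof.
apply/matrixP=> i j; rewrite !ord1 !mxE /=.
rewrite (eq_bigr (fun=> 1)); last by move=> k _; rewrite !mxE mulr1.
by rewrite sumr_const card_ord.
Qed.

Lemma centering_mul_ones : Mm *m e = 0.
Proof.
rewrite /centering mulmxBl mul1mx -scalemxAl -mulmxA tr_ones_mul_ones.
by rewrite mul_mx_scalar scalerA mulVf ?scale1r ?subrr // pnatr_eq0 -lt0n.
Qed.

Lemma trmx_centering : Mm^T = Mm.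
Proof. by rewrite /centering linearB /= linearZ /= trmx_mul trmxK trmx1. Qed.

Lemma centering_idem : Mm *m Mm = Mm.
Proof.
rewrite {2}/centering mulmxBr mulmx1 -scalemxAr mulmxA centering_mul_ones.
by rewrite mul0mx scaler0 subr0.
Qed.

End Centering.

Definition within_gls_weight (R : realFieldType) (m : nat) (S : 'M[R]_m) : 'M[R]_m :=
  let e := ones R m in
  invmx S - invmx S *m e *m invmx (e^T *m invmx S *m e) *m e^T *m invmx S.

Section WithinGroupWeight.
Variables (R : realFieldType) (m : nat) (S : 'M[R]_m).
Hypotheses (m_gt0 : (0 < m)%N) (S_spd : sym_pos_def S).

Local Notation e := (ones R m).
Local Notation Si := (invmx S).
Local Notation Mm := (centering R m).
Local Notation A := (within_gls_weight S).

Lemma trmx_invS : Si^T = Si.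
Proof. by rewrite trmx_inv; case: S_spd => ->. Qed.

Lemma quad_ones_invS_unit : e^T *m Si *m e \in unitmx.
Proof.
have S_unit := sym_pos_def_unit S_spd.
have Sie_neq0 : Si *m e != 0.
  move: (ones_neq0 R m_gt0); apply: contra_neq => Sie0.
  by rewrite -(mulKVmx S_unit e) Sie0 mulmx0.
case: S_spd => _ /(_ _ Sie_neq0).
rewrite trmx_mul trmx_invS -!mulmxA (mulmxA S) (mulmxV S_unit) mul1mx mulmxA.
by rewrite unitmxE unitfE det_mx11 => /gt_eqF ->.
Qed.

Lemma weight_mul_ones : A *m e = 0.
Proof.
rewrite /within_gls_weight mulmxBl -!mulmxA (mulmxA e^T Si e).
by rewrite (mulVmx quad_ones_invS_unit) mulmx1 subrr.
Qed.

Lemma trmx_weight : A^T = A.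
Proof.
have tr11 (a : 'M[R]_1) : a^T = a by apply/matrixP=> i j; rewrite !ord1 mxE.
rewrite /within_gls_weight linearB /= !trmx_mul !trmxK trmx_invS trmx_inv tr11.
by rewrite !mulmxA.
Qed.

Lemma weight_mul_centering : A *m Mm = A.
Proof.
rewrite /centering mulmxBr mulmx1 -scalemxAr mulmxA weight_mul_ones.
by rewrite mul0mx scaler0 subr0.
Qed.

Lemma centering_mul_weight : Mm *m A = A.
Proof.
by apply: trmx_inj; rewrite trmx_mul trmx_weight trmx_centering weight_mul_centering.
Qed.

Lemma centered_cov_mul_weight : Mm *m S *m Mm *m A = Mm.
Proof.
rewrite -mulmxA centering_mul_weight /within_gls_weight mulmxBr -!mulmxA.
rewrite !(mulmxA S Si) (mulmxV (sym_pos_def_unit S_spd)) !mul1mx mulmx1.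
by rewrite !mulmxA (centering_mul_ones R m_gt0) !mul0mx subr0.
Qed.

Lemma weight_mul_centered_cov : A *m (Mm *m S *m Mm) = Mm.
Proof.
apply: trmx_inj; rewrite trmx_mul trmx_weight !trmx_mul trmx_centering.
by case: S_spd => -> _; rewrite !mulmxA centered_cov_mul_weight.
Qed.

Lemma is_MP_inverse_weight : is_MP_inverse (Mm *m S *m Mm) A.
Proof.
split.
- by rewrite centered_cov_mul_weight !mulmxA (centering_idem R m_gt0).
- by rewrite weight_mul_centered_cov centering_mul_weight.
- by rewrite centered_cov_mul_weight trmx_centering.
- by rewrite weight_mul_centered_cov trmx_centering.
Qed.

End WithinGroupWeight.

Lemma gls_weight_tens (R : realFieldType) (n m : nat) (S : 'M[R]_m) :
  let W : 'M[R]_(n * m) := (1%:M : 'M_n) *t invmx S in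
  let Z : 'M[R]_(n * m, n * 1) := (1%:M : 'M_n) *t ones R m in
  (ones R m)^T *m invmx S *m ones R m \in unitmx ->
  W *m (1%:M - Z *m invmx (Z^T *m W *m Z) *m Z^T *m W)
    = (1%:M : 'M_n) *t within_gls_weight S.
Proof.
move=> W Z c_unit.
have ZWZ_inv :
    invmx (Z^T *m W *m Z) = 1%:M *t invmx ((ones R m)^T *m invmx S *m ones R m).
  by rewrite trmx_tens trmx1 !tensmx_mul !mulmx1 invmx_tens ?unitmx1 // invmx1.
rewrite ZWZ_inv trmx_tens trmx1 !tensmx_mul !mulmx1 -tens1mx1 -tensmxBr.
by rewrite tensmx_mul mulmx1 /within_gls_weight mulmxBr mulmx1 !mulmxA.
Qed.

Theorem theorem5 (R : realFieldType) (n m K : nat)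
  (hn : (2 <= n)%N) (hm : (2 <= m)%N) (hK : (1 <= K)%N)
  (X : 'M[R]_(n * m, K)) (Sigma : 'M[R]_m)
  (hSigma : sym_pos_def Sigma)
  (Mp : 'M[R]_(n * m)) :
  let In : 'M[R]_n := 1%:M in
  let Siginv := invmx Sigma in
  let W : 'M[R]_(n * m) := tensmx In Siginv in
  let Z : 'M[R]_(n * m, n * 1) := tensmx In (ones R m) in
  let Q : 'M[R]_(n * m) := Z *m invmx (Z^T *m W *m Z) *m Z^T *m W in
  let P : 'M[R]_(n * m) := W *m (1%:M - Q) in
  let Mm := centering R m in
  let M : 'M[R]_(n * m) := tensmx In Mm in
  let V : 'M[R]_(n * m) := tensmx In (Mm *m Sigma *m Mm) in
  is_MP_inverse V Mp ->
  let Cp := X^T *m M *m Mp *m M *m X in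
  X^T *m P *m X \in unitmx ->
  Cp \in unitmx ->
  forall y : 'cV[R]_(n * m),
    invmx Cp *m X^T *m M *m Mp *m y
    = invmx (X^T *m P *m X) *m X^T *m P *m y.
Proof.
move=> In Siginv W Z Q P Mm M V V_MP Cp _ _ y.
have m_gt0 : (0 < m)%N by apply: leq_trans hm.
have P_tens : P = In *t within_gls_weight Sigma.
  exact: (gls_weight_tens n (quad_ones_invS_unit m_gt0 hSigma)).
have Mp_P : Mp = P.
  apply: (MP_inverse_unique V_MP); rewrite P_tens.
  exact: is_MP_inverse_tens (is_MP_inverse1 _ _) (is_MP_inverse_weight m_gt0 hSigma).
have MP : M *m P = P.
  by rewrite P_tens tensmx_mul mulmx1 (centering_mul_weight m_gt0 hSigma).
have PM : P *m M = P.
  by rewrite P_tens tensmx_mul mulmx1 (weight_mul_centering m_gt0 hSigma).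
by rewrite /Cp Mp_P -!(mulmxA _ M P) MP -(mulmxA _ P M) PM.
Qed.
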